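(* Let $\mu$ be an admissible measure on $\mathbb R$ and $m:=\mu(\mathbb R)$. Then \[ 1-m\le T(\mu)\le\sqrt{1-m^2}, \] where $T(\mu):=\frac12\int_{\mathbb R}|e^x-e^{-x}|\,\mu(dx)$.
   Context: A finitely supported positive measure $\mu$ on $\mathbb R$ is called admissible if $\int e^x\,\mu(dx)=\int e^{-x}\,\mu(dx)=1$. *)

From Stdlib Require Import Reals List.
Open Scope R_scope.

(* A finitely supported positive measure on R, represented as a finite list
   of atoms (x, w) meaning  mu = sum_i w_i * delta_{x_i}  with w_i > 0.
   (Repeated support points are allowed; they simply add up.) *)
Definition fmeasure := list (R * R).

Definition positive_fm (mu : fmeasure) : Prop :=
  Forall (fun p => 0 < snd p) mu.

Definition fm_int (f : R -> R) (mu : fmeasure) : R :=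
  fold_right (fun p acc => snd p * f (fst p) + acc) 0 mu.

Definition fm_mass (mu : fmeasure) : R := fm_int (fun _ => 1) mu.

Definition admissible (mu : fmeasure) : Prop :=
  positive_fm mu /\ fm_int exp mu = 1 /\ fm_int (fun x => exp (- x)) mu = 1.

Definition T (mu : fmeasure) : R :=
  / 2 * fm_int (fun x => Rabs (exp x - exp (- x))) mu.

From Stdlib Require Import Reals Lra Psatz.
Open Scope R_scope.

(* With u = e^x and v = e^-x we have uv = 1, so the plane vector
   (2, |u - v|) has Euclidean length u + v.  Integrating, the vector
   (2 m, 2 T) is a positive combination of vectors whose lengths add up to
   int (e^x + e^-x) dmu = 2; by the triangle inequality its length is at
   most 2, i.e. m^2 + T^2 <= 1.  For the lower bound, uv = 1 forces
   min(u, v) <= 1, hence u + v <= 2 + |u - v|; integrating gives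
   2 <= 2 m + 2 T. *)

Lemma fm_int_add (f g : R -> R) (mu : fmeasure) :
  fm_int (fun x => f x + g x) mu = fm_int f mu + fm_int g mu.
Proof.
  induction mu as [|[x w] mu IH]; simpl; [ring | rewrite IH; ring].
Qed.

Lemma fm_int_const (c : R) (mu : fmeasure) :
  fm_int (fun _ => c) mu = c * fm_mass mu.
Proof.
  unfold fm_mass; induction mu as [|[x w] mu IH]; simpl; [ring | rewrite IH; ring].
Qed.

Lemma fm_int_le (f g : R -> R) (mu : fmeasure) :
  positive_fm mu -> (forall x, f x <= g x) -> fm_int f mu <= fm_int g mu.
Proof.
  intros Hpos Hfg; induction Hpos as [|[x w] mu Hw _ IH]; simpl in *; [lra|].
  specialize (Hfg x); nra.
Qed.

Lemma fm_int_nonneg (f : R -> R) (mu : fmeasure) :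
  positive_fm mu -> (forall x, 0 <= f x) -> 0 <= fm_int f mu.
Proof.
  intros Hpos Hf; induction Hpos as [|[x w] mu Hw _ IH]; simpl in *; [lra|].
  specialize (Hf x); nra.
Qed.

Lemma dot_le_mul_norms (a b c d r s : R) :
  0 <= r -> 0 <= s -> a ^ 2 + b ^ 2 <= r ^ 2 -> c ^ 2 + d ^ 2 <= s ^ 2 ->
  a * c + b * d <= r * s.
Proof.
  intros Hr Hs Hab Hcd.
  assert (Hcs : (a * c + b * d) ^ 2 <= (r * s) ^ 2).
  { assert (Hlagrange : (a * c + b * d) ^ 2 + (a * d - b * c) ^ 2
                        = (a ^ 2 + b ^ 2) * (c ^ 2 + d ^ 2)) by ring.
    assert (0 <= (a * d - b * c) ^ 2) by apply pow2_ge_0.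
    assert ((a ^ 2 + b ^ 2) * (c ^ 2 + d ^ 2) <= r ^ 2 * s ^ 2)
      by (apply Rmult_le_compat; nra).
    replace ((r * s) ^ 2) with (r ^ 2 * s ^ 2) by ring; lra. }
  apply Rsqr_incr_0_var; [rewrite !Rsqr_pow2; exact Hcs | nra].
Qed.

(* Triangle inequality in the plane for the vectors (f x, g x) weighted by mu. *)
Lemma fm_int_norm2_le (f g h : R -> R) (mu : fmeasure) :
  positive_fm mu -> (forall x, 0 <= h x) ->
  (forall x, f x ^ 2 + g x ^ 2 <= h x ^ 2) ->
  fm_int f mu ^ 2 + fm_int g mu ^ 2 <= fm_int h mu ^ 2.
Proof.
  intros Hpos Hh Hfgh; induction Hpos as [|[x w] mu Hw Hpos IH]; simpl in *; [lra|].
  set (F := fm_int f mu) in *; set (G := fm_int g mu) in *; set (H := fm_int h mu) in *.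
  assert (HH : 0 <= H) by (apply fm_int_nonneg; assumption).
  assert (Hdot : f x * F + g x * G <= h x * H)
    by (apply dot_le_mul_norms; [apply Hh | exact HH | apply Hfgh | exact IH]).
  specialize (Hfgh x); nra.
Qed.

Lemma add_le_2_add_abs_sub (u v : R) :
  u * v = 1 -> u + v <= 2 + Rabs (u - v).
Proof.
  intros Huv; destruct (Rle_dec v u).
  - rewrite Rabs_right by lra; nra.
  - rewrite Rabs_left1 by lra; nra.
Qed.

Lemma sqr_2_add_sqr_abs_sub (u v : R) :
  u * v = 1 -> 2 ^ 2 + Rabs (u - v) ^ 2 = (u + v) ^ 2.
Proof.
  intros Huv; rewrite pow2_abs; nra.
Qed.

Lemma exp_mul_exp_opp (x : R) : exp x * exp (- x) = 1.
Proof.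
  rewrite exp_Ropp; apply Rinv_r, Rgt_not_eq, exp_pos.
Qed.

Theorem lemma6 (mu : fmeasure) :
  admissible mu ->
  1 - fm_mass mu <= T mu /\ T mu <= sqrt (1 - fm_mass mu ^ 2).
Proof.
  intros [Hpos [Hexp Hexp_opp]].
  unfold T.
  set (g := fun x => Rabs (exp x - exp (- x))).
  assert (Hcosh : fm_int (fun x => exp x + exp (- x)) mu = 2)
    by (rewrite fm_int_add, Hexp, Hexp_opp; ring).
  assert (Hlow : fm_int (fun x => exp x + exp (- x)) mu <= fm_int (fun x => 2 + g x) mu).
  { apply fm_int_le; [assumption|].
    intro x; apply add_le_2_add_abs_sub, exp_mul_exp_opp. }
  assert (Hup : fm_int (fun _ => 2) mu ^ 2 + fm_int g mu ^ 2
                <= fm_int (fun x => exp x + exp (- x)) mu ^ 2).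
  { apply fm_int_norm2_le; [assumption | |].
    - intro x; pose proof (exp_pos x); pose proof (exp_pos (- x)); lra.
    - intro x; apply Req_le, sqr_2_add_sqr_abs_sub, exp_mul_exp_opp. }
  rewrite (fm_int_add (fun _ => 2) g), Hcosh, fm_int_const in Hlow.
  rewrite Hcosh, fm_int_const in Hup.
  assert (Hg : 0 <= fm_int g mu)
    by (apply fm_int_nonneg; [assumption | intro; apply Rabs_pos]).
  split; [lra|].
  rewrite <- (sqrt_pow2 (/ 2 * fm_int g mu)) by lra.
  apply sqrt_le_1_alt; nra.
Qed.
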